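(* For all $\mathbf x,\mathbf y\in\Omega$, $|g(\mathbf x)\wedge g(\mathbf y)|\ge|\mathbf x\wedge\mathbf y|-2$. In other words, for $k\ge1$, the first $k$ letters of $g(\mathbf x)$ are determined by the first $k+2$ letters of $\mathbf x$.
   Context: Let $\Sigma=\{1,\dots,N\}$ with $N\ge4$, and let $\tau,\kappa,\alpha,\gamma\in\Sigma$ be distinct except that $\tau=\alpha$ is allowed. $\Sigma^*$ denotes finite words, $a^k$ the word of $k$ copies of $a$, $\Omega=\{\omega\kappa^\infty:\omega\in\Sigma^*\}$, and $\mathbf x\wedge\mathbf y$ the maximal common prefix, $|\cdot|$ its length. Let $\mathcal C_M=\{\tau\gamma^k:k\ge2\}\cup\{\kappa\alpha^k\kappa\gamma:k\ge0\}$ and $\mathcal C_{M'}=\{\kappa\alpha^k\kappa\gamma:k\ge0\}\cup\{\kappa\alpha^k\kappa\gamma\gamma:k\ge0\}\cup\{\tau\gamma\gamma\}$; letters of $\Sigma$ are one-letter words. The $M$-decomposition of $\mathbf x\in\Omega$ is $\mathbf x=X_1X_2\cdots$ where each $X_k$ is the longest prefix of the remaining tail $X_kX_{k+1}\cdots$ lying in $\mathcal C_M\cup\Sigma$. Define $g_0:\mathcal C_M\cup\Sigma\to\mathcal C_{M'}\cup\Sigma$ by $\tau\gamma^k\mapsto\kappa\alpha^{k-2}\kappa\gamma$ ($k\ge2$), $\kappa\alpha^k\kappa\gamma\mapsto\kappa\alpha^{k-1}\kappa\gamma\gamma$ ($k\ge1$), $\kappa\kappa\gamma\mapsto\tau\gamma\gamma$,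 $i\mapsto i$ ($i\in\Sigma$), and $g:\Omega\to\Omega$ by $g(\mathbf x)=\prod_{j\ge1}g_0(X_j)$ (concatenation). *)

From mathcomp Require Import all_boot.
From Stdlib Require Import ClassicalEpsilon.
Set Implicit Arguments. Unset Strict Implicit. Unset Printing Implicit Defensive.

(* Letters of Sigma = {1,...,N} are natural numbers; infinite words are
   functions nat -> nat (position 0 is the first letter). *)

Section Substitution.
Variables (N tau kappa alpha gamma : nat).

Definition inOmega (x : nat -> nat) : Prop :=
  (forall n, 1 <= x n <= N) /\ exists m, forall n, m <= n -> x n = kappa.

Definition is_tg (w : seq nat) : bool :=
  (3 <= size w) && (w == tau :: nseq (size w - 1) gamma).

Definition is_kakg (w : seq nat) : bool :=
  (3 <= size w) && (w == kappa :: nseq (size w - 3) alpha ++ [:: kappa; gamma]).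

Definition inCM (w : seq nat) : bool := is_tg w || is_kakg w.

Definition isBlock (w : seq nat) : bool :=
  inCM w || ((size w == 1) && all (fun a => (1 <= a <= N)) w).

Definition g0 (w : seq nat) : seq nat :=
  if is_tg w then
    (* tau gamma^k  |->  kappa alpha^(k-2) kappa gamma,  k = size w - 1 *)
    kappa :: nseq (size w - 3) alpha ++ [:: kappa; gamma]
  else if is_kakg w then
    if 4 <= size w then
      (* kappa alpha^k kappa gamma |-> kappa alpha^(k-1) kappa gamma gamma, k = size w - 3 >= 1 *)
      kappa :: nseq (size w - 4) alpha ++ [:: kappa; gamma; gamma]
    else
      [:: tau; gamma; gamma]
  else w.

Definition subword (x : nat -> nat) (p l : nat) : seq nat :=
  mkseq (fun i => x (p + i)) l.

Definition blockLen (x : nat -> nat) (p : nat) : nat :=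
  epsilon (inhabits 1%N)
    (fun l => isBlock (subword x p l) /\
              forall l', isBlock (subword x p l') -> l' <= l).

(* starting position of the j-th block X_{j+1} of the M-decomposition *)
Fixpoint bpos (x : nat -> nat) (j : nat) : nat :=
  match j with
  | 0 => 0
  | j'.+1 => bpos x j' + blockLen x (bpos x j')
  end.

Definition block (x : nat -> nat) (j : nat) : seq nat :=
  subword x (bpos x j) (blockLen x (bpos x j)).

Definition gpref (x : nat -> nat) (m : nat) : seq nat :=
  flatten [seq g0 (block x j) | j <- iota 0 m].

(* g(x) = prod_j g_0(X_j); each g_0(X_j) is nonempty, so the n-th letter
   (0-indexed) already occurs in the concatenation of the first n+1 images. *)
Definition g (x : nat -> nat) (n : nat) : nat := nth 0 (gpref x n.+1) n.

End Substitution.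

From mathcomp Require Import all_boot zify.
From Stdlib Require Import ClassicalEpsilon.
Set Implicit Arguments. Unset Strict Implicit. Unset Printing Implicit Defensive.

(* The M-decompositions of x and y are computed greedily, so they stay synchronized
   as long as their blocks have equal lengths, and two blocks of equal length with
   the same first letter have the same image under g0.  Suppose that at a common
   position p < |x ^ y| - 2 the block Y of y is strictly longer than the block X of x.
   Then Y must run past the common prefix, since otherwise it would also be a longer
   block of x.  If Y = tau gamma^k, then X is tau gamma^k' and also runs past the
   prefix.  If Y = kappa alpha^k kappa gamma, then either X = kappa alpha^k' kappa gamma
   with its second kappa past the prefix, or X is the single letter kappa and x goes
   on as single letters alpha.  In every case both images read kappa alpha alpha ...
   up to two letters before the end of the common prefix. *)

Lemma size_subword x p l : size (subword x p l) = l.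
Proof. exact: size_mkseq. Qed.

Lemma nth_subword x p l o : o < l -> nth 0 (subword x p l) o = x (p + o).
Proof. exact: nth_mkseq. Qed.

Lemma subword1 x p : subword x p 1 = [:: x p].
Proof. by rewrite /subword /mkseq /= addn0. Qed.

Lemma eq_subword x y p l :
  (forall o, o < l -> x (p + o) = y (p + o)) -> subword x p l = subword y p l.
Proof. by move=> e; apply/eq_in_map => o; rewrite mem_iota => /andP[_ /e]. Qed.

Lemma subword_eqP x p l w :
  subword x p l = w <-> size w = l /\ forall o, o < l -> x (p + o) = nth 0 w o.
Proof.
split=> [<- | [sw ew]].
  by split=> [|o lt_ol]; rewrite ?size_subword ?nth_subword.
apply: (@eq_from_nth _ 0); rewrite size_subword ?sw // => o lt_ol.
by rewrite nth_subword ?ew.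
Qed.

Lemma nth_pattern (a b : nat) k s o :
  nth 0 (a :: nseq k b ++ s) o =
  if o == 0 then a else if o <= k then b else nth 0 s (o - k.+1).
Proof. by case: o => [|o] //=; rewrite cat_nseq nth_ncons subSS. Qed.

Lemma subword_patternP x p l a k b s :
  subword x p l = a :: nseq k b ++ s <->
  [/\ l = k.+1 + size s, x p = a,
      forall o, 0 < o <= k -> x (p + o) = b &
      forall o, o < size s -> x (p + k.+1 + o) = nth 0 s o].
Proof.
have size_pat : size (a :: nseq k b ++ s) = k.+1 + size s.
  by rewrite /= size_cat size_nseq.
rewrite subword_eqP size_pat; split=> [[<- e] | [-> e0 eb es]].
- split=> // [|o o_in|o o_lt].
  + by have := e 0 isT; rewrite addn0.
  + by rewrite e ?nth_pattern; [case: ifP o_in => [/eqP->|_ /andP[_ ->]] | lia].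
  + rewrite -addnA e ?nth_pattern; last by lia.
    by rewrite addSn /= ltnNge leq_addr /= subSS addKn.
- split=> // o o_lt; rewrite nth_pattern.
  case: eqP => [->|o_neq0]; first by rewrite addn0.
  case: leqP => o_k; first by apply: eb; lia.
  rewrite -es; last by lia.
  by rewrite -addnA subnKC.
Qed.

Section Substitution.
Variables (N tau kappa alpha gamma : nat).
Hypotheses (tau_neq_kappa : tau != kappa) (kappa_neq_alpha : kappa != alpha)
  (kappa_neq_gamma : kappa != gamma) (alpha_neq_gamma : alpha != gamma).

Local Notation inOmega' := (inOmega N kappa).
Local Notation is_tg' := (is_tg tau gamma).
Local Notation is_kakg' := (is_kakg kappa alpha gamma).
Local Notation isBlock' := (isBlock N tau kappa alpha gamma).
Local Notation g0' := (g0 tau kappa alpha gamma).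
Local Notation blockLen' := (blockLen N tau kappa alpha gamma).
Local Notation bpos' := (bpos N tau kappa alpha gamma).
Local Notation block' := (block N tau kappa alpha gamma).
Local Notation gpref' := (gpref N tau kappa alpha gamma).
Local Notation g' := (g N tau kappa alpha gamma).

Definition tg_at (x : nat -> nat) p l :=
  [/\ 3 <= l, x p = tau & forall o, 0 < o < l -> x (p + o) = gamma].

Definition kakg_at (x : nat -> nat) p l :=
  [/\ 3 <= l, x p = kappa, forall o, 0 < o < l - 2 -> x (p + o) = alpha,
      x (p + (l - 2)) = kappa & x (p + (l - 1)) = gamma].

Lemma is_tgP x p l : is_tg' (subword x p l) <-> tg_at x p l.
Proof.
rewrite /is_tg size_subword -[tau :: _]cats0; split.
  case/andP=> l_ge3 /eqP/subword_patternP[_ x_p e _]; split=> // o o_in.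
  by apply: e; lia.
case=> l_ge3 x_p e; rewrite l_ge3 /=; apply/eqP/subword_patternP.
by split=> // [|o o_in]; [rewrite addn0; lia | apply: e; lia].
Qed.

Lemma is_kakgP x p l : is_kakg' (subword x p l) <-> kakg_at x p l.
Proof.
rewrite /is_kakg size_subword; split.
  case/andP=> l_ge3 /eqP/subword_patternP[_ x_p e es]; split=> // [o o_in||].
  - by apply: e; lia.
  - by have := es 0 isT; have -> : p + (l - 3).+1 + 0 = p + (l - 2) by lia.
  - by have := es 1 isT; have -> : p + (l - 3).+1 + 1 = p + (l - 1) by lia.
case=> l_ge3 x_p e x_l2 x_l1; rewrite l_ge3 /=; apply/eqP/subword_patternP.
split=> // [|o o_in|[|[|o]] //= _]; first by rewrite [size _]/=; lia.
- by apply: e; lia.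
- by have -> : p + (l - 3).+1 + 0 = p + (l - 2) by lia.
- by have -> : p + (l - 3).+1 + 1 = p + (l - 1) by lia.
Qed.

Lemma tg_kakg_first_letter x y p l l' : tg_at x p l -> kakg_at y p l' -> x p != y p.
Proof. by case=> _ -> _ [_ -> _ _ _]. Qed.

Lemma isBlock_subword x p l :
  isBlock' (subword x p l) -> [\/ tg_at x p l, kakg_at x p l | l = 1].
Proof.
case/orP=> [/orP[/is_tgP|/is_kakgP]|]; [by constructor 1 | by constructor 2|].
by rewrite size_subword => /andP[/eqP l1 _]; constructor 3.
Qed.

Lemma tg_at_isBlock x p l : tg_at x p l -> isBlock' (subword x p l).
Proof. by move/is_tgP=> tg; rewrite /isBlock /inCM tg. Qed.

Lemma kakg_at_isBlock x p l : kakg_at x p l -> isBlock' (subword x p l).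
Proof. by move/is_kakgP=> kakg; rewrite /isBlock /inCM kakg orbT. Qed.

Lemma letter_isBlock x p : 1 <= x p <= N -> isBlock' (subword x p 1).
Proof. by move=> x_p; apply/orP; right; rewrite subword1 /= x_p. Qed.

Lemma tg_at_agree x y p l l' :
  tg_at y p l -> 3 <= l' <= l ->
  (forall o, o < l' -> x (p + o) = y (p + o)) -> tg_at x p l'.
Proof.
case=> _ y_p y_o l'_in xy; split=> [||o o_in]; first by case/andP: l'_in.
  by rewrite -y_p -[p]addn0 xy //; lia.
by rewrite xy ?y_o //; lia.
Qed.

Lemma isBlock_last x p l :
  isBlock' (subword x p l) -> 1 < l -> x (p + (l - 1)) = gamma.
Proof.
case/isBlock_subword=> [[_ _ x_o] l_gt1|[_ _ _ _ ->] //|-> //].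
by apply: x_o; lia.
Qed.

Lemma blockLen_spec x p : inOmega' x ->
  isBlock' (subword x p (blockLen' x p)) /\
  forall l, isBlock' (subword x p l) -> l <= blockLen' x p.
Proof.
case=> x_range [m x_tail].
pose P l := isBlock' (subword x p l).
have P1 : exists l, P l by exists 1; apply: letter_isBlock.
have P_bounded l : P l -> l <= m.+1.
  move=> Pl; case: (ltnP 1 l) => [l_gt1 | ]; last by lia.
  case: (ltnP (p + (l - 1)) m) => [|tail]; first by lia.
  by move: kappa_neq_gamma; rewrite -(isBlock_last Pl l_gt1) x_tail ?eqxx.
apply: (epsilon_spec (inhabits 1) (fun l => P l /\ forall l', P l' -> l' <= l)).
by case: (ex_maxnP P1 P_bounded) => l; exists l.
Qed.

Lemma blockLen_max x y p l : inOmega' x ->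
  (forall o, o < l -> x (p + o) = y (p + o)) -> isBlock' (subword y p l) ->
  l <= blockLen' x p.
Proof.
by move=> x_Omega xy; rewrite -(eq_subword xy); apply: (blockLen_spec p x_Omega).2.
Qed.

Lemma blockLen_gt0 x p : inOmega' x -> 0 < blockLen' x p.
Proof.
move=> x_Omega; apply: (blockLen_max (y := x)) => //.
by apply: letter_isBlock; case: x_Omega.
Qed.

Lemma blockLen_alpha x q : inOmega' x ->
  x q = alpha -> x (q + 1) = alpha -> blockLen' x q = 1.
Proof.
move=> x_Omega x_q x_q1; have [blk _] := blockLen_spec q x_Omega.
case: (isBlock_subword blk) => [[len_ge3 _ x_o]|[_ x_q' _ _ _]|//].
  by move: alpha_neq_gamma; rewrite -x_q1 x_o ?eqxx //; lia.
by move: kappa_neq_alpha; rewrite -x_q x_q' eqxx.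
Qed.

Lemma size_g0 w : size (g0' w) = size w.
Proof.
rewrite /g0; case: ifP => [/andP[w_ge3 _]|_].
  by rewrite /= size_cat size_nseq /=; lia.
case: ifP => [/andP[w_ge3 _]|_] //.
by case: ifP => w_ge4; rewrite /= ?size_cat ?size_nseq /=; lia.
Qed.

Lemma gprefD x m k :
  gpref' x (m + k) = gpref' x m ++ flatten [seq g0' (block' x j) | j <- iota m k].
Proof. by rewrite /gpref iotaD map_cat flatten_cat. Qed.

Lemma size_gpref x m : size (gpref' x m) = bpos' x m.
Proof.
elim: m => [|m IHm] //; rewrite -addn1 gprefD size_cat IHm /= cats0.
by rewrite size_g0 size_subword addn1.
Qed.

Lemma bpos_ge x j : inOmega' x -> j <= bpos' x j.
Proof.
move=> x_Omega; elim: j => [|j IHj] //=.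
by have := blockLen_gt0 (bpos' x j) x_Omega; lia.
Qed.

Lemma g_block x j i : inOmega' x ->
  bpos' x j <= i < bpos' x j + blockLen' x (bpos' x j) ->
  g' x i =
  nth 0 (g0' (subword x (bpos' x j) (blockLen' x (bpos' x j)))) (i - bpos' x j).
Proof.
move=> x_Omega i_in; have j_le_i : j <= i by have := bpos_ge j x_Omega; lia.
rewrite /g -(subnKC j_le_i) -addSn gprefD -addn1 gprefD -catA nth_cat size_gpref.
rewrite ifN ?subnKC -?leqNgt; [|lia..].
by rewrite /= cats0 nth_cat size_g0 size_subword ifT //; lia.
Qed.

Lemma bpos_letters x j t :
  (forall s, s < t -> blockLen' x (bpos' x j + s) = 1) ->
  bpos' x (j + t) = bpos' x j + t.
Proof.
elim: t => [|t IHt] letters; first by rewrite !addn0.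
rewrite addnS /= IHt => [|s s_lt]; last by apply: letters; lia.
by rewrite letters // addn1 addnS.
Qed.

Lemma g_letter x j : inOmega' x ->
  blockLen' x (bpos' x j) = 1 -> g' x (bpos' x j) = x (bpos' x j).
Proof.
move=> x_Omega len1.
by rewrite (@g_block x j) ?len1 ?subword1 ?subnn //; lia.
Qed.

Lemma g0_tg x p l : tg_at x p l ->
  g0' (subword x p l) = kappa :: nseq (l - 3) alpha ++ [:: kappa; gamma].
Proof. by move/is_tgP=> tg; rewrite /g0 tg size_subword. Qed.

Lemma g0_kakg x p l : kakg_at x p l ->
  g0' (subword x p l) =
  if 4 <= l then kappa :: nseq (l - 4) alpha ++ [:: kappa; gamma; gamma]
  else [:: tau; gamma; gamma].
Proof.
move=> kakg; have not_tg : is_tg' (subword x p l) = false.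
  by apply/negP=> /is_tgP tg; case/negP: (tg_kakg_first_letter tg kakg).
by move/is_kakgP: kakg => kakg; rewrite /g0 not_tg kakg size_subword.
Qed.

Lemma nth_g0_tg x p l o : tg_at x p l -> o + 3 <= l ->
  nth 0 (g0' (subword x p l)) o = if o == 0 then kappa else alpha.
Proof.
move=> tg o_lt; rewrite (g0_tg tg) nth_pattern.
by case: eqP => // _; rewrite ifT //; lia.
Qed.

Lemma nth_g0_kakg x p l o : kakg_at x p l -> o + 4 <= l ->
  nth 0 (g0' (subword x p l)) o = x (p + o).
Proof.
move=> kakg o_lt; have [_ x_p x_o _ _] := kakg.
rewrite (g0_kakg kakg) ifT ?nth_pattern; last by lia.
by case: eqP => [->|o_neq0]; rewrite ?addn0 // ifT ?x_o //; lia.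
Qed.

Lemma g0_subword_eq x y p l : x p = y p ->
  isBlock' (subword x p l) -> isBlock' (subword y p l) ->
  g0' (subword x p l) = g0' (subword y p l).
Proof.
move=> xy_p /isBlock_subword[tx|kx|->] /isBlock_subword[ty|ky|l1];
  try by rewrite ?subword1 ?xy_p.
- by rewrite (g0_tg tx) (g0_tg ty).
- by case/negP: (tg_kakg_first_letter tx ky); rewrite xy_p.
- by case: tx; rewrite l1.
- by case/negP: (tg_kakg_first_letter ty kx); rewrite xy_p.
- by rewrite (g0_kakg kx) (g0_kakg ky).
- by case: kx; rewrite l1.
Qed.

Section Divergence.
Variables (x y : nat -> nat) (n j p : nat).
Hypotheses (x_Omega : inOmega' x) (y_Omega : inOmega' y)
  (xy : forall i, i < n -> x i = y i)
  (bpos_x : bpos' x j = p) (bpos_y : bpos' y j = p) (p_lt : p < n - 2)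
  (shorter : blockLen' x p < blockLen' y p).

Let g_block_x i : p <= i < p + blockLen' x p ->
  g' x i = nth 0 (g0' (subword x p (blockLen' x p))) (i - p).
Proof. by rewrite -bpos_x; apply: g_block. Qed.

Let g_block_y i : p <= i < p + blockLen' y p ->
  g' y i = nth 0 (g0' (subword y p (blockLen' y p))) (i - p).
Proof. by rewrite -bpos_y; apply: g_block. Qed.

Let longer_block_exceeds : n < p + blockLen' y p.
Proof.
rewrite ltnNge; apply/negP=> within; have [blk_y _] := blockLen_spec p y_Omega.
suff : blockLen' y p <= blockLen' x p by rewrite leqNgt shorter.
by apply: (blockLen_max x_Omega _ blk_y) => o o_lt; apply: xy; lia.
Qed.

Lemma diverge_tg : tg_at y p (blockLen' y p) ->
  forall i, p <= i < n - 2 -> g' x i = g' y i.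
Proof.
move=> tg_y i i_in; have exceeds := longer_block_exceeds.
have tg_x : tg_at x p (n - p).
  by apply: (tg_at_agree tg_y) => [|o o_lt]; [lia | apply: xy; lia].
have len_x : n - p <= blockLen' x p.
  by apply: (blockLen_max (y := x)) => //; exact: tg_at_isBlock.
have tg_x' : tg_at x p (blockLen' x p).
  have [blk_x _] := blockLen_spec p x_Omega.
  case: (isBlock_subword blk_x) => [//|kakg_x|len1]; last by lia.
  by case/negP: (tg_kakg_first_letter tg_x kakg_x).
by rewrite g_block_x ?g_block_y ?(nth_g0_tg tg_x') ?(nth_g0_tg tg_y) //; lia.
Qed.

Lemma diverge_kakg_kakg : kakg_at y p (blockLen' y p) -> kakg_at x p (blockLen' x p) ->
  forall i, p <= i < n - 2 -> g' x i = g' y i.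
Proof.
move=> kakg_y kakg_x i i_in; have [len_x_ge3 _ _ x_kappa _] := kakg_x.
have [_ _ y_alpha _ _] := kakg_y.
have x_ends : n <= p + (blockLen' x p - 2).
  rewrite leqNgt; apply/negP=> inside; move: kappa_neq_alpha.
  by rewrite -x_kappa xy ?y_alpha ?eqxx //; lia.
rewrite g_block_x ?g_block_y ?(nth_g0_kakg kakg_x) ?(nth_g0_kakg kakg_y) ?xy //; lia.
Qed.

Lemma diverge_kakg_letter : kakg_at y p (blockLen' y p) -> blockLen' x p = 1 ->
  forall i, p <= i < n - 2 -> g' x i = g' y i.
Proof.
move=> kakg_y len1 i i_in; have exceeds := longer_block_exceeds.
have [_ _ y_alpha _ _] := kakg_y.
(* x reads kappa alpha alpha ... and is parsed into single letters, which g fixes. *)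
have letters s : s <= i - p -> blockLen' x (p + s) = 1.
  case: s => [|s] s_le; first by rewrite addn0.
  by apply: blockLen_alpha => //; rewrite -?addnA xy ?y_alpha //; lia.
have bpos_i : bpos' x (j + (i - p)) = i.
  by rewrite bpos_letters bpos_x => [|s s_lt]; [lia | apply: letters; lia].
have g_x_i : g' x i = x i.
  by rewrite -{1 2}bpos_i g_letter // bpos_i -(subnKC (proj1 (andP i_in))) letters.
rewrite g_x_i g_block_y ?(nth_g0_kakg kakg_y) ?subnKC ?xy //; lia.
Qed.

Lemma g_agree_after_divergence i : p <= i < n - 2 -> g' x i = g' y i.
Proof.
have [blk_x _] := blockLen_spec p x_Omega; have [blk_y _] := blockLen_spec p y_Omega.
have xy_p : x p = y p by apply: xy; lia.
case: (isBlock_subword blk_y) => [tg_y|kakg_y|len1_y]; first exact: diverge_tg.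
  case: (isBlock_subword blk_x) => [tg_x|kakg_x|len1_x].
  - by case/negP: (tg_kakg_first_letter tg_x kakg_y); rewrite xy_p.
  - exact: diverge_kakg_kakg.
  - exact: diverge_kakg_letter.
by have := blockLen_gt0 p x_Omega; lia.
Qed.

End Divergence.

Section Synchronization.
Variables (x y : nat -> nat) (n : nat).
Hypotheses (x_Omega : inOmega' x) (y_Omega : inOmega' y)
  (xy : forall i, i < n -> x i = y i).

Lemma synchronized_or_agree j :
  (bpos' x j = bpos' y j /\ forall i, i < minn (bpos' x j) (n - 2) -> g' x i = g' y i)
  \/ forall i, i < n - 2 -> g' x i = g' y i.
Proof.
elim: j => [|j [[bpos_xy agree] | agree]]; last by right.
  by left; split=> // i /=; rewrite min0n.
set p := bpos' x j in bpos_xy agree *.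
case: (leqP (n - 2) p) => p_lt; first by right=> i i_lt; apply: agree; lia.
have yx i : i < n -> y i = x i by move/xy.
case: (ltngtP (blockLen' x p) (blockLen' y p)) => [shorter|longer|same_len].
- right=> i i_lt; case: (ltnP i p) => [i_lt_p|p_le_i]; first by apply: agree; lia.
  by apply: (g_agree_after_divergence (j := j) x_Omega y_Omega xy) => //; lia.
- right=> i i_lt; case: (ltnP i p) => [i_lt_p|p_le_i]; first by apply: agree; lia.
  by apply/esym/(g_agree_after_divergence y_Omega x_Omega yx (esym bpos_xy)) => //; lia.
left; split; first by rewrite /= -/p -bpos_xy same_len.
move=> i; rewrite /= -/p => i_lt.
case: (ltnP i p) => [i_lt_p|p_le_i]; first by apply: agree; lia.
rewrite (@g_block x j) ?(@g_block y j) -/p -?bpos_xy -?same_len //; [|lia..].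
have xy_p : x p = y p by apply: xy; lia.
have [blk_x _] := blockLen_spec p x_Omega; have [blk_y _] := blockLen_spec p y_Omega.
by rewrite same_len in blk_x *; rewrite (g0_subword_eq xy_p blk_x blk_y).
Qed.

End Synchronization.

End Substitution.

Theorem lemma7p1 (N tau kappa alpha gamma : nat) :
  4 <= N ->
  1 <= tau <= N -> 1 <= kappa <= N -> 1 <= alpha <= N -> 1 <= gamma <= N ->
  tau != kappa -> tau != gamma -> kappa != alpha -> kappa != gamma ->
  alpha != gamma ->
  forall x y : nat -> nat,
    inOmega N kappa x -> inOmega N kappa y ->
    forall n : nat, (forall i, i < n -> x i = y i) ->
    forall i, i < n - 2 ->
      g N tau kappa alpha gamma x i = g N tau kappa alpha gamma y i.
Proof.
move=> _ _ _ _ _ tau_neq_kappa _ kappa_neq_alpha kappa_neq_gamma alpha_neq_gamma.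
move=> x y x_Omega y_Omega n xy i i_lt.
have n_le := bpos_ge tau_neq_kappa kappa_neq_alpha kappa_neq_gamma alpha_neq_gamma
  n x_Omega.
have [[_ agree]|agree] := synchronized_or_agree tau_neq_kappa kappa_neq_alpha
  kappa_neq_gamma alpha_neq_gamma x_Omega y_Omega xy n; apply: agree; lia.
Qed.
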